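(* Let $K$ be a field complete with respect to a discrete valuation with finite residue field, and let $\mathcal T$ be the Bruhat–Tits tree of $PSL(2,K)$. Let $\Gamma$ be a group, $\rho:\Gamma\to PSL(2,K)$ a representation (acting on $\mathcal T$), and $\Upsilon\subset\Gamma$ a normal subgroup such that $\rho(\Upsilon)$ has a nonempty set of fixed points in $\mathcal T$. Suppose $\rho(\Gamma)$ is Zariski-dense in $PSL(2,K)$ and not contained in any compact subgroup of $PSL(2,K)$. Then $\rho(\Upsilon)$ is trivial.
   Context: The Bruhat–Tits tree $\mathcal T$: vertices are lattices ($\mathcal O_K$-submodules $M\subset K^2$ of rank two spanning $K^2$) up to multiplication by $K^*$; two classes are joined by an edge of length $1$ if representatives satisfy $M_1\subset M_2$ with $M_2/M_1\cong\mathcal O_K/\mathfrak m$. $SL(2,K)$ acts by $M\mapsto gM$, the center acting trivially, giving an isometric action of $PSL(2,K)$. *)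

From HB Require Import structures.
From mathcomp Require Import all_boot all_order all_algebra.
From mathcomp Require mpoly.
From Stdlib Require Rdefinitions.
Notation Real := Rdefinitions.R.
Set Implicit Arguments. Unset Strict Implicit. Unset Printing Implicit Defensive.
Import Order.TTheory GRing.Theory Num.Theory.
Local Open Scope ring_scope.

Definition is_group (G : Type) (mul : G -> G -> G) (inv : G -> G) (one : G) :=
  [/\ forall x y z, mul x (mul y z) = mul (mul x y) z,
      forall x, mul one x = x, forall x, mul x one = x,
      forall x, mul (inv x) x = one & forall x, mul x (inv x) = one].

Definition is_normal_subgroup (G : Type) (mul : G -> G -> G) (inv : G -> G)
  (one : G) (U : G -> Prop) :=
  [/\ U one, forall x y, U x -> U y -> U (mul x y), forall x, U x -> U (inv x)
    & forall g x, U x -> U (mul (mul g x) (inv g))].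

(* Discrete valuations.  v is only meaningful on K^*; v 0 is irrelevant
   (the valuation of 0 is +oo); [vge v x n] means  val(x) >= n.        *)
Section Val.
Variable K : fieldType.
Variable v : K -> int.

Definition vge (x : K) (n : int) : Prop := x = 0 \/ (n <= v x)%R.

Definition is_discrete_valuation : Prop :=
  [/\ forall x y, x != 0 -> y != 0 -> v (x * y) = v x + v y,
      forall x y, x != 0 -> y != 0 -> x + y != 0 ->
                  (Order.min (v x) (v y) <= v (x + y))%R
    & exists x, x != 0 /\ v x != 0].

Definition in_O (x : K) : Prop := vge x 0.

Definition cauchy_seq (a : nat -> K) : Prop :=
  forall n : int, exists N : nat, forall p q : nat, (N <= p)%N -> (N <= q)%N ->
    vge (a p - a q) n.

Definition converges_to (a : nat -> K) (l : K) : Prop :=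
  forall n : int, exists N : nat, forall p : nat, (N <= p)%N -> vge (a p - l) n.

Definition complete_val : Prop :=
  forall a, cauchy_seq a -> exists l, converges_to a l.

Definition finite_residue_field : Prop :=
  exists s : seq K, (forall r, r \in s -> in_O r) /\
    forall a, in_O a -> exists2 r, r \in s & vge (a - r) 1.

(* SL(2,K) and PSL(2,K).  An element of PSL(2,K) is represented by a
   matrix of SL(2,K), modulo sign.                                      *)
Definition in_SL2 (A : 'M[K]_2) : Prop := \det A = 1.

Definition psl_eq (A B : 'M[K]_2) : Prop := A = B \/ A = - B.

(* subsets of PSL(2,K) = sign-invariant subsets of SL(2,K) *)
Definition psl_set (S : 'M[K]_2 -> Prop) : Prop :=
  (forall A, S A -> in_SL2 A) /\ (forall A, S A -> S (- A)).

Definition psl_subgroup (H : 'M[K]_2 -> Prop) : Prop :=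
  [/\ psl_set H, H 1%:M, forall A B, H A -> H B -> H (A *m B)
    & forall A, H A -> H (invmx A)].

(* topology of K^4 = 'M[K]_2 induced by the valuation; subspace topology on
   SL(2,K); quotient topology on PSL(2,K) = SL(2,K)/{+-1} *)
Definition near_mx (A B : 'M[K]_2) (n : int) : Prop :=
  forall i j, vge (B i j - A i j) n.

Definition sl2_open (U : 'M[K]_2 -> Prop) : Prop :=
  forall A, U A -> in_SL2 A -> exists n : int,
    forall B, in_SL2 B -> near_mx A B n -> U B.

Definition psl_open (U : 'M[K]_2 -> Prop) : Prop := psl_set U /\ sl2_open U.

Definition psl_compact (C : 'M[K]_2 -> Prop) : Prop :=
  psl_set C /\
  forall (I : Type) (U : I -> 'M[K]_2 -> Prop),
    (forall i, psl_open (U i)) ->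
    (forall A, C A -> exists i, U i A) ->
    exists s : seq I, forall A, C A -> exists i, List.In i s /\ U i A.

(* Zariski density in (P)SL(2,K): a subset S of PSL(2,K), given by its
   (sign-invariant) preimage in SL(2,K) ⊂ K^4, is Zariski-dense iff every
   polynomial in the four matrix entries vanishing on S vanishes on SL(2,K). *)
Definition mx_coords (A : 'M[K]_2) : 'I_4 -> K :=
  fun k => A (inord (k %/ 2)) (inord (k %% 2)).

Definition zariski_dense_SL2 (S : 'M[K]_2 -> Prop) : Prop :=
  forall p : mpoly.mpoly 4 K,
    (forall A, S A -> mpoly.meval (mx_coords A) p = 0) ->
    forall A, in_SL2 A -> mpoly.meval (mx_coords A) p = 0.

Definition lat := 'cV[K]_2 -> Prop.

Definition set_eq (M N : lat) : Prop := forall x, M x <-> N x.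

Definition is_lattice (M : lat) : Prop :=
  exists E : 'M[K]_2, E \in unitmx /\
    set_eq M (fun x => exists a b, in_O a /\ in_O b /\
                 x = a *: col 0 E + b *: col 1 E).

Definition act_lat (g : 'M[K]_2) (M : lat) : lat :=
  fun x => exists y, M y /\ x = g *m y.

Definition scale_lat (c : K) (M : lat) : lat :=
  fun x => exists y, M y /\ x = c *: y.

(* same vertex: homothetic lattices *)
Definition homothetic (M N : lat) : Prop :=
  exists c : K, c != 0 /\ set_eq N (scale_lat c M).

(* M2 / M1 isomorphic to O/m, with M1 ⊂ M2 *)
Definition quot_residue (M1 M2 : lat) : Prop :=
  (forall x, M1 x -> M2 x) /\
  exists x0, M2 x0 /\
    (forall x, M2 x <-> exists y a, M1 y /\ in_O a /\ x = y + a *: x0) /\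
    (forall a, in_O a -> (M1 (a *: x0) <-> vge a 1)).

Definition adjacent (M N : lat) : Prop :=
  exists M' N', homothetic M M' /\ homothetic N N' /\ quot_residue M' N'.

(* points of the (geometric realization of the) tree:
   a vertex, or the point at distance t from M1 on the edge [M1, M2]. *)
Inductive tpoint :=
  | TVert of lat
  | TEdge of lat & lat & Real.

Definition valid_point (p : tpoint) : Prop :=
  match p with
  | TVert M => is_lattice M
  | TEdge M1 M2 t => [/\ is_lattice M1, is_lattice M2, adjacent M1 M2
                       & (Rdefinitions.Rlt Rdefinitions.R0 t /\ Rdefinitions.Rlt t Rdefinitions.R1)]
  end.

Definition same_point (p q : tpoint) : Prop :=
  match p, q with
  | TVert M, TVert N => homothetic M N
  | TEdge M1 M2 t, TEdge N1 N2 s =>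
      (homothetic M1 N1 /\ homothetic M2 N2 /\ t = s) \/
      (homothetic M1 N2 /\ homothetic M2 N1 /\ t = Rdefinitions.Rminus Rdefinitions.R1 s)
  | _, _ => False
  end.

Definition act_point (g : 'M[K]_2) (p : tpoint) : tpoint :=
  match p with
  | TVert M => TVert (act_lat g M)
  | TEdge M1 M2 t => TEdge (act_lat g M1) (act_lat g M2) t
  end.

Definition fixes_point (g : 'M[K]_2) (p : tpoint) : Prop :=
  same_point (act_point g p) p.

End Val.

From mathcomp Require Import all_boot all_order all_algebra.
From mathcomp Require Import zify ring.
From mathcomp Require Import mpoly.
From Stdlib Require Import Classical IndefiniteDescription.
Set Implicit Arguments. Unset Strict Implicit. Unset Printing Implicit Defensive.
Import Order.TTheory GRing.Theory Num.Theory.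
Local Open Scope ring_scope.

(* Suppose rho u0 <> +-1 for some u0 in Ups.  A point of the tree fixed by
   rho(Ups) yields a basis P of K^2 in which every rho(u), u in Ups, has entries
   of valuation >= -v(pi).  As Ups is normal and rho(Gam) is Zariski dense, a
   linear form on M_2(K) vanishing on rho(Ups) vanishes on every SL(2)-conjugate
   of the non-scalar matrix rho(u0), hence on both off-diagonal elementary
   matrices (in the basis P); so these lie in the linear span of rho(Ups).
   Conjugating them by rho(g) bounds the squares of the entries of
   P rho(g) P^-1 uniformly in g.  Thus rho(Gam) preserves a lattice, whose
   stabilizer is a bounded closed, hence compact (K is complete with finite
   residue field), subgroup of PSL(2,K) containing rho(Gam): a contradiction. *)

Lemma classic_ex_minn (P : nat -> Prop) :
  (exists n, P n) -> exists n, P n /\ forall m, P m -> (n <= m)%N.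
Proof.
move=> [n Pn]; elim: n {-2}n (leqnn n) Pn => [|k IH] j hj Pj.
  by exists j; split=> // m _; move: hj; rewrite leqn0 => /eqP ->.
have [[i [Pi lt_ij]]|min_j] := classic (exists i, P i /\ (i < j)%N).
  by apply: (IH i) => //; lia.
exists j; split=> // m Pm; case: (leqP j m) => // lt_mj.
by case: min_j; exists m.
Qed.

Lemma classic_ex_max (X : Type) (P : X -> Prop) (f : X -> nat) (b : nat) :
  (exists x, P x) -> (forall x, P x -> (f x <= b)%N) ->
  exists x, P x /\ forall y, P y -> (f y <= f x)%N.
Proof.
move=> [x0 Px0] fb.
have [_ [[x [Px <-]] min_x]] :=
  classic_ex_minn (ex_intro (fun n => exists x, P x /\ (b - f x)%N = n) _
                     (ex_intro _ x0 (conj Px0 erefl))).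
exists x; split=> // y Py; have := min_x _ (ex_intro _ y (conj Py erefl)).
by have := fb x Px; have := fb y Py; lia.
Qed.

Section Valuation.
Variables (K : fieldType) (v : K -> int).
Hypothesis hv : is_discrete_valuation v.

Lemma dvalM x y : x != 0 -> y != 0 -> v (x * y) = v x + v y.
Proof. by case: hv => mulv _ _; apply: mulv. Qed.

Lemma dval1 : v 1 = 0.
Proof.
have := dvalM (oner_neq0 K) (oner_neq0 K); rewrite mulr1 => h.
have : v 1 + v 1 - v 1 = v 1 - v 1 by rewrite -h.
by rewrite addrK subrr.
Qed.

Lemma dvalN x : v (- x) = v x.
Proof.
have N1_neq0 : (-1 : K) != 0 by rewrite oppr_eq0 oner_neq0.
have dvalN1 : v (-1) = 0.
  by have := dvalM N1_neq0 N1_neq0; rewrite mulrNN mulr1 dval1; lia.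
have [->|x_neq0] := eqVneq x 0; first by rewrite oppr0.
by rewrite -mulN1r dvalM // dvalN1 add0r.
Qed.

Lemma dvalV x : x != 0 -> v x^-1 = - v x.
Proof.
move=> x_neq0; have := dvalM x_neq0 (invr_neq0 x_neq0).
by rewrite mulfV // dval1; lia.
Qed.

Lemma dvalX x k : x != 0 -> v (x ^+ k) = k%:Z * v x.
Proof.
move=> x_neq0; elim: k => [|k IH]; first by rewrite expr0 dval1 mul0r.
by rewrite exprS dvalM ?expf_neq0 // IH; lia.
Qed.

Lemma vgeW x n m : vge v x n -> m <= n -> vge v x m.
Proof. by move=> [->|h] hmn; [left|right; apply: le_trans h]. Qed.

Lemma vge_val x : vge v x (v x).
Proof. by right. Qed.

Lemma vge0 n : vge v 0 n.
Proof. by left. Qed.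

Lemma vge_eq0 x : (forall n, vge v x n) -> x = 0.
Proof. by move=> h; case: (h (v x + 1)) => // /=; lia. Qed.

Lemma vgeN x n : vge v x n -> vge v (- x) n.
Proof. by case=> [->|h]; [left; rewrite oppr0|right; rewrite dvalN]. Qed.

Lemma vgeD x y n : vge v x n -> vge v y n -> vge v (x + y) n.
Proof.
case=> [->|hx]; first by rewrite add0r.
case=> [->|hy]; first by rewrite addr0; right.
have [->|xy_neq0] := eqVneq (x + y) 0; first by left.
have [->|x_neq0] := eqVneq x 0; first by rewrite add0r; right.
have [->|y_neq0] := eqVneq y 0; first by rewrite addr0; right.
right; apply: le_trans (_ : Order.min (v x) (v y) <= _); first by rewrite le_min hx hy.
by case: hv => _ addv _; apply: addv.
Qed.

Lemma vgeB x y n : vge v x n -> vge v y n -> vge v (x - y) n.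
Proof. by move=> hx hy; apply: vgeD => //; apply: vgeN. Qed.

Lemma vgeM x y n m : vge v x n -> vge v y m -> vge v (x * y) (n + m).
Proof.
case=> [->|hx]; first by rewrite mul0r; left.
case=> [->|hy]; first by rewrite mulr0; left.
have [->|x_neq0] := eqVneq x 0; first by rewrite mul0r; left.
have [->|y_neq0] := eqVneq y 0; first by rewrite mulr0; left.
by right; rewrite dvalM // lerD.
Qed.

Lemma vgeMl x y n : vge v y n -> vge v (x * y) (v x + n).
Proof. exact/vgeM/vge_val. Qed.

Lemma vge_sum (I : Type) (r : seq I) (P : pred I) (F : I -> K) n :
  (forall i, P i -> vge v (F i) n) -> vge v (\sum_(i <- r | P i) F i) n.
Proof.
move=> h; elim/big_rec: _ => [|i x Pi hx]; first exact: vge0.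
by apply: vgeD => //; apply: h.
Qed.

Lemma vge_sqr x n : n <= 0 -> vge v (x * x) n -> vge v x n.
Proof.
move=> n_le0 [/eqP|]; first by rewrite mulf_eq0 orbb => /eqP ->; left.
have [->|x_neq0] := eqVneq x 0; first by left.
by rewrite dvalM // => h; right; lia.
Qed.

Lemma vge_mulKl x c n : c != 0 -> vge v (c * x) n -> vge v x (n - v c).
Proof.
move=> c_neq0 [/eqP|]; first by rewrite mulf_eq0 (negbTE c_neq0) => /eqP ->; left.
have [->|x_neq0] := eqVneq x 0; first by left.
by rewrite dvalM // => h; right; lia.
Qed.

Lemma exists_uniformizer :
  exists pi, [/\ pi != 0, 0 < v pi & forall y, y != 0 -> 0 < v y -> v pi <= v y].
Proof.
have [y [y_neq0 vy_gt0]] : exists y, y != 0 /\ 0 < v y.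
  case: hv => _ _ [x [x_neq0]]; case: (ltrgtP (v x) 0) => // vx _.
    by exists x^-1; rewrite invr_eq0 dvalV // oppr_gt0.
  by exists x.
pose P n := exists z, z != 0 /\ v z = n.+1%:Z.
have [n [[z [z_neq0 vz]] min_n]] : exists n, P n /\ forall m, P m -> (n <= m)%N.
  by apply: classic_ex_minn; exists (`|v y| - 1)%N, y; split => //; lia.
exists z; split=> //; first by rewrite vz.
move=> w w_neq0 vw_gt0.
have : P (`|v w| - 1)%N by exists w; split => //; lia.
by move/min_n; lia.
Qed.

End Valuation.

Lemma ord2P (i : 'I_2) : i = 0 \/ i = 1.
Proof. case: i => [[|[|k]] hk]; [left|right|by []]; exact: val_inj. Qed.

Lemma big_ord2 (R : nmodType) (F : 'I_2 -> R) : \sum_(i < 2) F i = F 0 + F 1.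
Proof. by rewrite big_ord_recl big_ord1; congr (_ + F _); apply: val_inj. Qed.

Ltac mx2_ext := apply/matrixP; let i := fresh "i" in let j := fresh "j" in
  intros i j; destruct (ord2P i) as [-> | ->]; destruct (ord2P j) as [-> | ->];
  rewrite ?(mxE, big_ord2) /=.

Definition mx22 (R : Type) (a b c d : R) : 'M[R]_2 :=
  \matrix_(i < 2, j < 2) if i == 0 then (if j == 0 then a else b)
                         else (if j == 0 then c else d).

Definition adj2 (R : pzRingType) (A : 'M[R]_2) : 'M[R]_2 :=
  mx22 (A 1 1) (- A 0 1) (- A 1 0) (A 0 0).

Section Matrix22.
Variable R : comNzRingType.
Implicit Types A B : 'M[R]_2.

Lemma det2 A : \det A = A 0 0 * A 1 1 - A 0 1 * A 1 0.
Proof.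
rewrite (expand_det_row _ 0) big_ord2 /cofactor !det_mx11 !mxE /=.
have -> : lift 0 (0 : 'I_1) = 1 :> 'I_2 by apply: val_inj.
have -> : lift 1 (0 : 'I_1) = 0 :> 'I_2 by apply: val_inj.
by rewrite /= expr0 expr1; ring.
Qed.

Lemma det_mx22 (a b c d : R) : \det (mx22 a b c d) = a * d - b * c.
Proof. by rewrite det2 !mxE. Qed.

Lemma det2N A : \det (- A) = \det A.
Proof. by rewrite !det2 !mxE; ring. Qed.

Lemma mulmx_adj2 A : A *m adj2 A = (\det A)%:M.
Proof. by rewrite det2; mx2_ext; rewrite ?mulr1n ?mulr0n; ring. Qed.

Lemma mul_adj2mx A : adj2 A *m A = (\det A)%:M.
Proof. by rewrite det2; mx2_ext; rewrite ?mulr1n ?mulr0n; ring. Qed.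

Lemma adj2N A : adj2 (- A) = - adj2 A.
Proof. by mx2_ext; ring. Qed.

Lemma adj2B A B : adj2 (A - B) = adj2 A - adj2 B.
Proof. by mx2_ext; ring. Qed.

Lemma adj2M A B : adj2 (A *m B) = adj2 B *m adj2 A.
Proof. by mx2_ext; ring. Qed.

Lemma adj2K A : adj2 (adj2 A) = A.
Proof. by mx2_ext; rewrite ?opprK. Qed.

Lemma adj2_1 : adj2 (1%:M : 'M[R]_2) = 1%:M.
Proof. by mx2_ext; rewrite ?mulr1n ?mulr0n ?oppr0. Qed.

Lemma det_adj2 A : \det (adj2 A) = \det A.
Proof. by rewrite !det2 !mxE /=; ring. Qed.

End Matrix22.

Lemma map_adj2 (R S : comNzRingType) (f : {rmorphism R -> S}) (A : 'M[R]_2) :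
  map_mx f (adj2 A) = adj2 (map_mx f A).
Proof. by mx2_ext; rewrite ?rmorphN. Qed.

Lemma invmx_adj2 (F : fieldType) (A : 'M[F]_2) : \det A = 1 -> invmx A = adj2 A.
Proof.
move=> detA; have A_unit : A \in unitmx by rewrite unitmxE detA unitr1.
by rewrite -[RHS]mul1mx -(mulVmx A_unit) -mulmxA mulmx_adj2 detA mulmx1.
Qed.

Section UnitConjugation.
Variables (F : fieldType) (n : nat) (P : 'M[F]_n).
Hypothesis P_unit : P \in unitmx.

Lemma conjmxMu A B : conjmx P (A *m B) = conjmx P A *m conjmx P B.
Proof. by rewrite conjmxM // inE stablemx_unit. Qed.

Lemma conjmx1u : conjmx P 1%:M = 1%:M.
Proof. by rewrite conjmx_scalar // row_free_unit. Qed.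

Lemma conjmxD A B : conjmx P (A + B) = conjmx P A + conjmx P B.
Proof. by rewrite /conjmx mulmxDr mulmxDl. Qed.

Lemma conjmxN A : conjmx P (- A) = - conjmx P A.
Proof. by rewrite /conjmx mulmxN mulNmx. Qed.

Lemma conjmxZ c A : conjmx P (c *: A) = c *: conjmx P A.
Proof. by rewrite /conjmx -scalemxAr -scalemxAl. Qed.

Lemma conjmx_sum m (A : 'I_m -> 'M[F]_n) :
  conjmx P (\sum_k A k) = \sum_k conjmx P (A k).
Proof. by rewrite /conjmx mulmx_sumr mulmx_suml. Qed.

Lemma det_conjmx A : \det (conjmx P A) = \det A.
Proof.
rewrite conjumx // !det_mulmx det_inv mulrAC mulfV ?mul1r //.
by rewrite -unitfE -unitmxE.
Qed.

End UnitConjugation.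

Lemma conjmx_adj2 (F : fieldType) (P A : 'M[F]_2) : P \in unitmx -> \det A = 1 ->
  conjmx P (adj2 A) = adj2 (conjmx P A).
Proof.
move=> P_unit detA.
have h1 : conjmx P A *m conjmx P (adj2 A) = 1%:M.
  by rewrite -conjmxMu // mulmx_adj2 detA conjmx1u.
have h2 : adj2 (conjmx P A) *m conjmx P A = 1%:M.
  by rewrite mul_adj2mx det_conjmx // detA.
by rewrite -[LHS]mul1mx -h2 -mulmxA h1 mulmx1.
Qed.

Section PslEq.
Variable K : fieldType.
Implicit Types A B C D : 'M[K]_2.

Lemma psl_eq_refl A : psl_eq A A.
Proof. by left. Qed.

Lemma psl_eq_sym A B : psl_eq A B -> psl_eq B A.
Proof. by case=> ->; [left|right; rewrite opprK]. Qed.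

Lemma psl_eq_trans A B C : psl_eq A B -> psl_eq B C -> psl_eq A C.
Proof. by case=> ->; case=> ->; rewrite ?opprK; [left|right|right|left]. Qed.

Lemma psl_eq_mul A B C D : psl_eq A B -> psl_eq C D -> psl_eq (A *m C) (B *m D).
Proof.
by case=> ->; case=> ->; rewrite ?mulNmx ?mulmxN ?opprK; [left|right|right|left].
Qed.

Lemma psl_eq_conjmx P A B : psl_eq A B -> psl_eq (conjmx P A) (conjmx P B).
Proof. by case=> ->; [left|right; rewrite /conjmx mulmxN mulNmx]. Qed.

End PslEq.

Section ProjectiveRepresentation.
Variables (K : fieldType) (Gam : Type).
Variables (mul : Gam -> Gam -> Gam) (inv : Gam -> Gam) (one : Gam).
Hypothesis hGam : is_group mul inv one.
Variable rho : Gam -> 'M[K]_2.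
Hypothesis rhoSL : forall g, in_SL2 (rho g).
Hypothesis rhoM : forall g h, psl_eq (rho (mul g h)) (rho g *m rho h).

Lemma rho1 : psl_eq (rho one) 1%:M.
Proof.
have := rhoM one one; case: hGam => _ -> _ _ _ h.
have adjK : adj2 (rho one) *m rho one = 1%:M by rewrite mul_adj2mx rhoSL.
have := psl_eq_mul (psl_eq_refl (adj2 (rho one))) h.
by rewrite adjK mulmxA adjK mul1mx => /psl_eq_sym.
Qed.

Lemma rhoV g : psl_eq (rho (inv g)) (adj2 (rho g)).
Proof.
have := rhoM g (inv g); case: hGam => _ _ _ _ -> h.
have := psl_eq_mul (psl_eq_refl (adj2 (rho g))) (psl_eq_trans (psl_eq_sym h) rho1).
by rewrite mulmxA mul_adj2mx rhoSL mul1mx mulmx1.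
Qed.

Lemma rho_conjg g u :
  psl_eq (rho (mul (mul g u) (inv g))) (rho g *m rho u *m adj2 (rho g)).
Proof.
apply: psl_eq_trans (rhoM _ _) _.
exact: psl_eq_mul (rhoM _ _) (rhoV g).
Qed.

End ProjectiveRepresentation.

Definition conj_annihilates (K : fieldType) (psi : 'M[K]_2 -> K) (A : 'M[K]_2) :=
  forall B, \det B = 1 -> psi (B *m A *m adj2 B) = 0.

Definition weyl2 (K : fieldType) : 'M[K]_2 := mx22 0 1 (-1) 0.

Lemma det_weyl2 (K : fieldType) : \det (weyl2 K) = 1.
Proof. by rewrite det_mx22; ring. Qed.

Lemma nonscalar_mx2 (K : fieldType) (A : 'M[K]_2) : ~~ is_scalar_mx A ->
  A 1 0 = 0 -> A 1 1 - A 0 0 = 0 -> A 0 1 != 0.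
Proof.
move=> nsA c0 ad; apply: contra nsA => /eqP b0; apply/is_scalar_mxP; exists (A 0 0).
move/eqP: ad; rewrite subr_eq0 => /eqP ad.
by mx2_ext; rewrite ?mulr1n ?mulr0n.
Qed.

Section ConjugationAnnihilators.
Variables (K : fieldType) (psi : 'M[K]_2 -> K).

Lemma conj_annihilates_conj W A : \det W = 1 ->
  conj_annihilates psi A -> conj_annihilates psi (W *m A *m adj2 W).
Proof.
move=> detW annA B detB; rewrite -(annA (B *m W)); last by rewrite det_mulmx detB detW mulr1.
by rewrite adj2M !mulmxA.
Qed.

Lemma conj_annihilates_comp W A : \det W = 1 ->
  conj_annihilates psi A -> conj_annihilates (fun X => psi (W *m X *m adj2 W)) A.
Proof.
move=> detW annA B detB; rewrite -(annA (W *m B)); last by rewrite det_mulmx detB detW mul1r.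
by rewrite adj2M !mulmxA.
Qed.

End ConjugationAnnihilators.

Section LinearForms.
Variables (K : fieldType) (x : K).
Hypotheses (x_neq0 : x != 0) (x_neq1 : x != 1).

Lemma quadratic_coefs_eq0 (p0 p1 p2 : K) :
  (forall t, p0 + t * p1 + t * t * p2 = 0) -> p1 = 0 /\ p2 = 0.
Proof.
move=> h; have p0_eq0 := h 0; rewrite !mul0r !addr0 in p0_eq0; rewrite p0_eq0 in h.
have h1 := h 1; rewrite !mul1r add0r in h1.
have hx := h x; rewrite add0r in hx.
have : x * (x - 1) * p2 = 0.
  have -> : x * (x - 1) * p2 = (x * p1 + x * x * p2) - x * (p1 + p2) by ring.
  by rewrite hx h1 mulr0 subrr.
move/eqP; rewrite !mulf_eq0 subr_eq0 (negbTE x_neq0) (negbTE x_neq1) /= => /eqP p2_eq0.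
by split => //; move: h1; rewrite p2_eq0 addr0.
Qed.

Variable psi : 'M[K]_2 -> K.
Hypothesis psiD : forall X Y, psi (X + Y) = psi X + psi Y.
Hypothesis psiZ : forall c X, psi (c *: X) = c * psi X.

(* Conjugating A by the unipotent [[1, t], [0, 1]] is quadratic in t;
   both non-constant coefficients must vanish. *)
Lemma conj_annihilates_unipotent A : conj_annihilates psi A ->
  psi (mx22 (A 1 0) (A 1 1 - A 0 0) 0 (- A 1 0)) = 0 /\
  A 1 0 * psi (delta_mx 0 1) = 0.
Proof.
move=> annA.
have quad t : psi A + t * psi (mx22 (A 1 0) (A 1 1 - A 0 0) 0 (- A 1 0))
              + t * t * psi ((- A 1 0) *: delta_mx 0 1) = 0.
  rewrite -!psiZ -!psiD -[RHS](annA (mx22 1 t 0 1)); last by rewrite det_mx22; ring.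
  by congr psi; mx2_ext; rewrite ?mulr1n ?mulr0n; ring.
have [-> quad_coef] := quadratic_coefs_eq0 quad; split => //.
by move: quad_coef; rewrite psiZ mulNr => /eqP; rewrite oppr_eq0 => /eqP.
Qed.

Lemma conj_annihilates_e01 A : ~~ is_scalar_mx A -> conj_annihilates psi A ->
  psi (delta_mx 0 1) = 0.
Proof.
move=> nsA annA; have [upper c_e01] := conj_annihilates_unipotent annA.
have [c0|c_neq0] := eqVneq (A 1 0) 0; last first.
  by move/eqP: c_e01; rewrite mulf_eq0 (negbTE c_neq0) => /eqP.
have [ad|ad_neq0] := eqVneq (A 1 1 - A 0 0) 0; last first.
  have : psi (mx22 (A 1 0) (A 1 1 - A 0 0) 0 (- A 1 0))
         = (A 1 1 - A 0 0) * psi (delta_mx 0 1).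
    by rewrite -psiZ; congr psi; mx2_ext; rewrite ?c0; ring.
  by rewrite upper => /esym/eqP; rewrite mulf_eq0 (negbTE ad_neq0) => /eqP.
have b_neq0 := nonscalar_mx2 nsA c0 ad.
have annA' := conj_annihilates_conj (det_weyl2 K) annA.
have [_ c_e01'] := conj_annihilates_unipotent annA'.
have weyl_c : (weyl2 K *m A *m adj2 (weyl2 K)) 1 0 = - A 0 1.
  by rewrite !(mxE, big_ord2) /=; ring.
rewrite weyl_c in c_e01'.
by move/eqP: c_e01'; rewrite mulf_eq0 oppr_eq0 (negbTE b_neq0) => /eqP.
Qed.

End LinearForms.

Lemma conj_annihilates_e10 (K : fieldType) (x : K) (x_neq0 : x != 0) (x_neq1 : x != 1)
  (psi : 'M[K]_2 -> K) (psiD : forall X Y, psi (X + Y) = psi X + psi Y)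
  (psiZ : forall c X, psi (c *: X) = c * psi X) (A : 'M[K]_2) :
  ~~ is_scalar_mx A -> conj_annihilates psi A -> psi (delta_mx 1 0) = 0.
Proof.
move=> nsA annA; pose w := weyl2 K.
pose psi' X := psi (w *m X *m adj2 w).
have : psi' (delta_mx 0 1) = 0.
  apply: (conj_annihilates_e01 x_neq0 x_neq1 _ _ nsA (conj_annihilates_comp (det_weyl2 K) annA)).
  - by move=> X Y; rewrite /psi' mulmxDr mulmxDl psiD.
  - by move=> c X; rewrite /psi' -scalemxAr -scalemxAl psiZ.
have -> : psi' (delta_mx 0 1) = - psi (delta_mx 1 0).
  by rewrite /psi' -mulN1r -psiZ; congr psi; mx2_ext; rewrite ?mulr1n ?mulr0n; ring.
by move/eqP; rewrite oppr_eq0 => /eqP.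
Qed.

Section ZariskiDensity.
Variable K : fieldType.

Definition generic_mx : 'M[{mpoly K[4]}]_2 := \matrix_(i, j) 'X_(inord (i * 2 + j)).

Lemma meval_generic_mx (B : 'M[K]_2) : map_mx (meval (mx_coords B)) generic_mx = B.
Proof.
apply/matrixP => i j; rewrite !mxE mevalXU /mx_coords.
have ij_lt4 : (i * 2 + j < 4)%N by case: (ord2P i) => ->; case: (ord2P j) => ->.
have ediv : ((i * 2 + j) %/ 2 = i)%N /\ ((i * 2 + j) %% 2 = j)%N.
  by case: (ord2P i) => ->; case: (ord2P j) => ->.
by rewrite inordK // ediv.1 ediv.2 !inord_val.
Qed.

(* On SL(2), B^-1 = adj2 B, so B A0 B^-1 is polynomial in the entries of B. *)
Lemma zariski_dense_conj_form (S : 'M[K]_2 -> Prop) (A0 : 'M[K]_2)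
    (C : 'M[K]_(2 * 2)) (j : 'I_(2 * 2)) :
  zariski_dense_SL2 S ->
  (forall A, S A -> (mxvec (A *m A0 *m adj2 A) *m C) 0 j = 0) ->
  forall B, in_SL2 B -> (mxvec (B *m A0 *m adj2 B) *m C) 0 j = 0.
Proof.
move=> denseS vanishS.
pose cst m n (M : 'M[K]_(m, n)) := map_mx (fun c => c%:MP_[4]) M.
pose p := (mxvec (generic_mx *m cst _ _ A0 *m adj2 generic_mx) *m cst _ _ C) 0 j.
have meval_p B : meval (mx_coords B) p = (mxvec (B *m A0 *m adj2 B) *m C) 0 j.
  have meval_cst m n (M : 'M[K]_(m, n)) : map_mx (meval (mx_coords B)) (cst _ _ M) = M.
    by apply/matrixP => a b; rewrite !mxE mevalC.
  have meval_entry (M : 'M[{mpoly K[4]}]_(1, 2 * 2)) :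
    meval (mx_coords B) (M 0 j) = (map_mx (meval (mx_coords B)) M) 0 j by rewrite mxE.
  rewrite meval_entry.
  by rewrite map_mxM map_mxvec !map_mxM map_adj2 meval_generic_mx !meval_cst.
move=> B detB; rewrite -meval_p; apply: denseS => // A SA; rewrite meval_p.
exact: vanishS.
Qed.

End ZariskiDensity.

Section LinearSpan.
Variables (K : fieldType) (T : Type) (t0 : T) (f : T -> 'M[K]_2) (S : T -> Prop).

Definition span_mx (s : seq T) : 'M[K]_(size s, 2 * 2) :=
  \matrix_(k < size s) mxvec (f (nth t0 s k)).

Lemma span_mx_cons (s : seq T) t :
  (span_mx s <= span_mx (t :: s))%MS /\ (mxvec (f t) <= span_mx (t :: s))%MS.
Proof.
have row_span (k : 'I_(size (t :: s))) : (mxvec (f (nth t0 (t :: s) k)) <= span_mx (t :: s))%MS.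
  by rewrite -(rowK (fun k => mxvec (f (nth t0 (t :: s) k)))); apply: row_sub.
split; last exact: (row_span ord0).
by apply/row_subP => k; rewrite rowK; apply: (row_span (lift ord0 k)).
Qed.

Lemma exists_spanning_seq : exists s : seq T,
  (forall k : 'I_(size s), S (nth t0 s k)) /\
  forall t, S t -> (mxvec (f t) <= span_mx s)%MS.
Proof.
pose in_S s := forall k : 'I_(size s), S (nth t0 s k).
have in_S_nil : in_S [::] by case.
have [s [Ss max_s]] := @classic_ex_max _ in_S (fun s => \rank (span_mx s)) (2 * 2)
  (ex_intro _ [::] in_S_nil) (fun s _ => rank_leq_col (span_mx s)).
exists s; split => // t St; apply/negPn/negP => t_notin.
have Sts : in_S (t :: s).
  by move=> [[|k] hk] //=; apply: (Ss (Ordinal (hk : (k < size s)%N))).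
have [sub_s sub_t] := span_mx_cons s t.
have := max_s _ Sts; rewrite leqNgt => /negP; apply; apply: rank_ltmx.
rewrite ltmxE sub_s /=; apply: contra t_notin; exact: submx_trans sub_t.
Qed.

Lemma span_or_annihilator (X : 'M[K]_2) :
  (exists (s : seq T) (c : 'I_(size s) -> K),
     (forall k : 'I_(size s), S (nth t0 s k)) /\ X = \sum_k c k *: f (nth t0 s k)) \/
  (exists (C : 'M[K]_(2 * 2)) (j : 'I_(2 * 2)), (mxvec X *m C) 0 j != 0 /\
     forall t, S t -> (mxvec (f t) *m C) 0 j = 0).
Proof.
have [s [Ss span_s]] := exists_spanning_seq.
have [/submxP [D XD]|X_notin] := boolP (mxvec X <= span_mx s)%MS.
  left; exists s, (fun k => D 0 k); split=> //.
  rewrite -[X]mxvecK XD mulmx_sum_row linear_sum /=.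
  by apply: eq_bigr => k _; rewrite rowK linearZ /= mxvecK.
right; exists (cokermx (span_mx s)); move: X_notin; rewrite submxE => X_notin.
have [j Xj] : exists j, (mxvec X *m cokermx (span_mx s)) 0 j != 0.
  apply: NNPP => all0; case/negP: X_notin; apply/eqP/matrixP => i j.
  rewrite (ord1 i) [RHS]mxE; apply: NNPP => Xj; apply: all0; exists j; exact/eqP.
exists j; split=> // t St.
by move: (span_s t St); rewrite submxE => /eqP ->; rewrite mxE.
Qed.

End LinearSpan.

Section EntryValuations.
Variables (K : fieldType) (v : K -> int).
Hypothesis hv : is_discrete_valuation v.

Definition entries_vge (A : 'M[K]_2) (n : int) := forall i j, vge v (A i j) n.

Definition vec_vge (x : 'cV[K]_2) (n : int) := forall i, vge v (x i 0) n.

Lemma entries_vge_exists A : exists n, entries_vge A n.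
Proof.
exists (Order.min (Order.min (v (A 0 0)) (v (A 0 1)))
                  (Order.min (v (A 1 0)) (v (A 1 1)))).
by move=> i j; case: (ord2P i) => ->; case: (ord2P j) => ->;
  apply: vgeW (vge_val v _) _; lia.
Qed.

Lemma entries_vgeW A n m : entries_vge A n -> m <= n -> entries_vge A m.
Proof. by move=> hA mn i j; apply: vgeW (hA i j) mn. Qed.

Lemma entries_vgeN A n : entries_vge A n -> entries_vge (- A) n.
Proof. by move=> hA i j; rewrite mxE; apply: (vgeN hv). Qed.

Lemma entries_vgeM A B n m :
  entries_vge A n -> entries_vge B m -> entries_vge (A *m B) (n + m).
Proof.
by move=> hA hB i j; rewrite mxE; apply: (vge_sum hv) => k _; apply: (vgeM hv).
Qed.

Lemma vec_vgeM A x n m : entries_vge A n -> vec_vge x m -> vec_vge (A *m x) (n + m).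
Proof.
by move=> hA hx i; rewrite mxE; apply: (vge_sum hv) => k _; apply: (vgeM hv).
Qed.

Lemma vec_vgeD x y n : vec_vge x n -> vec_vge y n -> vec_vge (x + y) n.
Proof. by move=> hx hy i; rewrite mxE; apply: (vgeD hv). Qed.

Lemma vec_vgeN x n : vec_vge x n -> vec_vge (- x) n.
Proof. by move=> hx i; rewrite mxE; apply: (vgeN hv). Qed.

Lemma vec_vgeZ c x n : vge v c 0 -> vec_vge x n -> vec_vge (c *: x) n.
Proof. by move=> hc hx i; rewrite mxE -[n]add0r; apply: (vgeM hv). Qed.

Lemma entries_vge_adj2 A n : entries_vge A n -> entries_vge (adj2 A) n.
Proof.
move=> hA i j; rewrite mxE.
by case: (ord2P i) => ->; case: (ord2P j) => -> /=; try apply: (vgeN hv); apply: hA.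
Qed.

Lemma entries_vge_sum m (c : 'I_m -> K) (A : 'I_m -> 'M[K]_2) n k :
  (forall l, vge v (c l) n) -> (forall l, entries_vge (A l) k) ->
  entries_vge (\sum_l c l *: A l) (n + k).
Proof.
move=> hc hA i j; rewrite summxE; apply: (vge_sum hv) => l _; rewrite mxE.
exact: (vgeM hv (hc l) (hA l i j)).
Qed.

Lemma vge_uniform_bound m (c : 'I_m -> K) : exists n, forall l, vge v (c l) n.
Proof.
exists (- \sum_(l < m) `|v (c l)|%:Z) => l; apply: vgeW (vge_val v _) _.
rewrite (bigD1 l) //=.
have : 0 <= \sum_(i < m | i != l) `|v (c i)|%:Z by apply: sumr_ge0.
by move: (\sum_(i < m | i != l) _) (v (c l)) => S a; lia.
Qed.

Lemma vec_vge_delta j : vec_vge (delta_mx j 0) 0.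
Proof.
move=> i; rewrite mxE; case: (_ && _); rewrite /= ?mulr1n ?mulr0n.
  by right; rewrite (dval1 hv).
exact: vge0.
Qed.

Lemma entries_vge_of_vec (A : 'M[K]_2) n :
  (forall y, vec_vge y 0 -> vec_vge (A *m y) n) -> entries_vge A n.
Proof. by move=> hA i j; have := hA _ (vec_vge_delta j) i; rewrite -colE mxE. Qed.

End EntryValuations.

Section Lattices.
Variables (K : fieldType) (v : K -> int).
Hypothesis hv : is_discrete_valuation v.

Definition lattice_of (E : 'M[K]_2) : lat K :=
  fun x => exists y, vec_vge v y 0 /\ x = E *m y.

Lemma lattice_ofZ E a x : vge v a 0 -> lattice_of E x -> lattice_of E (a *: x).
Proof.
move=> ha [y [hy ->]]; exists (a *: y); split; last by rewrite scalemxAr.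
exact: (vec_vgeZ hv).
Qed.

Lemma lattice_ofD E x y : lattice_of E x -> lattice_of E y -> lattice_of E (x + y).
Proof.
move=> [x' [hx' ->]] [y' [hy' ->]]; exists (x' + y'); split; last by rewrite mulmxDr.
exact: (vec_vgeD hv).
Qed.

Lemma lattice_of_scale E c M : set_eq M (lattice_of E) ->
  set_eq (scale_lat c M) (lattice_of (c *: E)).
Proof.
move=> hM x; split.
  by move=> [y [/hM [z [hz ->]] ->]]; exists z; split => //; rewrite scalemxAl.
move=> [z [hz ->]]; exists (E *m z); split; first by apply/hM; exists z.
by rewrite scalemxAl.
Qed.

Lemma is_lattice_basis M : is_lattice v M -> exists E, E \in unitmx /\ set_eq M (lattice_of E).
Proof.
move=> [E [E_unit hM]]; exists E; split => // x; rewrite hM; split.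
  move=> [a [b [ha [hb ->]]]]; exists (\col_i if i == 0 then a else b); split.
    by move=> i; case: (ord2P i) => ->; rewrite mxE.
  by apply/matrixP => i j; rewrite (ord1 j) !(mxE, big_ord2) /=; ring.
move=> [y [hy ->]]; exists (y 0 0), (y 1 0); do 2!(split; first exact: hy).
by apply/matrixP => i j; rewrite (ord1 j) !(mxE, big_ord2) /=; ring.
Qed.

Lemma scale_latP (c : K) (M : lat K) x : c != 0 -> scale_lat c M x <-> M (c^-1 *: x).
Proof.
move=> c_neq0; split; first by move=> [y [My ->]]; rewrite scalerA mulVf // scale1r.
by move=> Mx; exists (c^-1 *: x); rewrite scalerA mulfV // scale1r.
Qed.

Lemma val_ge0_of_det1 (X : 'M[K]_2) c : c != 0 -> \det X = 1 ->
  entries_vge v (c *: X) 0 -> 0 <= v c.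
Proof.
move=> c_neq0 detX cX.
have : vge v (c * c) 0.
  have -> : c * c = \det (c *: X) by rewrite detZ detX mulr1 expr2.
  have products i j k l : vge v ((c *: X) i j * (c *: X) k l) 0.
    by have := vgeM hv (cX i j) (cX k l); rewrite addr0.
  by rewrite det2; apply: (vgeB hv).
by case=> [/eqP|]; [rewrite mulf_eq0 orbb (negbTE c_neq0)|rewrite (dvalM hv) //; lia].
Qed.

Section Sandwich.
Variables (M : lat K) (E B : 'M[K]_2) (a b : K).
Hypotheses (E_unit : E \in unitmx) (hM : set_eq M (lattice_of E)).
Hypotheses (detB : \det B = 1) (a_neq0 : a != 0) (b_neq0 : b != 0).
Let X := conjmx (invmx E) B.

Let detX : \det X = 1.
Proof. by rewrite det_conjmx // unitmx_inv. Qed.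

Let EX (y : 'cV[K]_2) : E *m (X *m y) = B *m (E *m y).
Proof. by rewrite /X conjVmx // !mulmxA mulmxV // mul1mx. Qed.

Let E_inj (y z : 'cV[K]_2) : E *m y = E *m z -> y = z.
Proof. by move=> h; rewrite -(mulKmx E_unit y) h mulKmx. Qed.

Let M_of y : vec_vge v y 0 -> M (E *m y).
Proof. by move=> hy; apply/hM; exists y. Qed.

Lemma sandwich_lower_bound :
  (forall x, M x -> act_lat B M (a *: x)) -> entries_vge v (a *: X) 0.
Proof.
move=> sub; rewrite -(adj2K (a *: X)); apply: (entries_vge_adj2 hv).
apply: (entries_vge_of_vec hv) => y hy.
have [_ [/hM [w [hw ->]] ax]] := sub _ (M_of hy).
have Xw : X *m w = a *: y by apply: E_inj; rewrite EX -ax scalemxAr.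
have -> : adj2 (a *: X) = a *: adj2 X by mx2_ext; rewrite ?mulrN.
by rewrite -scalemxAl scalemxAr -Xw mulmxA mul_adj2mx detX mul1mx.
Qed.

Lemma sandwich_upper_bound :
  (forall y, act_lat B M y -> M (b *: y)) -> entries_vge v (b *: X) 0.
Proof.
move=> sup; apply: (entries_vge_of_vec hv) => y hy.
have [w [hw ew]] := (hM _).1 (sup _ (ex_intro _ _ (conj (M_of hy) erefl))).
suff -> : b *: X *m y = w by [].
by apply: E_inj; rewrite -scalemxAl -scalemxAr EX ew.
Qed.

(* a M ⊆ B M and b (B M) ⊆ M: the first inclusion, with det X = 1, gives
   v a >= 0, and the second bounds the entries of X below by -v b. *)
Lemma lattice_sandwich_bound :
  (forall x, M x -> act_lat B M (a *: x)) ->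
  (forall y, act_lat B M y -> M (b *: y)) ->
  entries_vge v X (- v (a * b)).
Proof.
move=> sub sup; have va_ge0 := val_ge0_of_det1 a_neq0 detX (sandwich_lower_bound sub).
move=> i j; have := vgeMl hv b^-1 (sandwich_upper_bound sup i j).
rewrite mxE mulKf // (dvalV hv) // (dvalM hv) // addr0 => h.
by apply: vgeW h _; lia.
Qed.

End Sandwich.

Variable pi : K.
Hypotheses (pi_neq0 : pi != 0) (pi_gt0 : 0 < v pi).

Lemma quot_residue_pi (N1 N2 : lat K) (E : 'M[K]_2) :
  set_eq N1 (lattice_of E) -> quot_residue v N1 N2 -> forall x, N2 x -> N1 (pi *: x).
Proof.
move=> hN1 [_ [x0 [_ [hN2 hx0]]]] x /hN2 [y [c [N1y [hc ->]]]].
have pi_ge0 : vge v pi 0 by right; apply: ltW.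
rewrite scalerDr scalerA; apply/hN1; apply: lattice_ofD.
  by apply: (lattice_ofZ pi_ge0); apply/hN1.
apply/hN1/hx0; first by have := vgeM hv pi_ge0 hc; rewrite addr0.
by have := vgeMl hv pi hc; rewrite addr0 => h; apply: vgeW h _; lia.
Qed.

Lemma fixed_vertex_bound (M : lat K) (E B : 'M[K]_2) :
  E \in unitmx -> set_eq M (lattice_of E) -> \det B = 1 ->
  homothetic (act_lat B M) M -> entries_vge v (conjmx (invmx E) B) (- v pi).
Proof.
move=> E_unit hM detB [c [c_neq0 hc]].
suff bound : entries_vge v (conjmx (invmx E) B) (- v (c^-1 * c)).
  by apply: entries_vgeW bound _; rewrite mulVf // (dval1 hv); lia.
apply: lattice_sandwich_bound; rewrite ?invr_eq0 //.
- by move=> x /hc /(scale_latP _ _ c_neq0).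
- by move=> y By; apply/hc/(scale_latP _ _ c_neq0); rewrite scalerA mulVf // scale1r.
Qed.

Lemma swapped_edge_bound (M1 M2 M1' M2' : lat K) (E B : 'M[K]_2) :
  E \in unitmx -> set_eq M1 (lattice_of E) -> \det B = 1 ->
  homothetic M1 M1' -> homothetic M2 M2' -> quot_residue v M1' M2' ->
  homothetic (act_lat B M1) M2 -> entries_vge v (conjmx (invmx E) B) (- v pi).
Proof.
move=> E_unit hM1 detB [c1 [c1_neq0 hM1']] [c2 [c2_neq0 hM2']] quot [c [c_neq0 hc]].
have hM1'E : set_eq M1' (lattice_of (c1 *: E)).
  by move=> x; rewrite hM1'; apply: lattice_of_scale.
have [sub12 _] := quot.
have c2c_neq0 : c2 * c != 0 by rewrite mulf_neq0.
suff bound : entries_vge v (conjmx (invmx E) B) (- v (c1 / (c2 * c) * (pi * (c2 * c) / c1))).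
  apply: entries_vgeW bound _; rewrite (_ : _ * _ = pi) //.
  by field; rewrite c1_neq0 c2_neq0 c_neq0.
apply: lattice_sandwich_bound; rewrite ?mulf_neq0 ?invr_eq0 //.
- move=> x M1x; have /hM2'/(scale_latP _ _ c2_neq0)/hc/(scale_latP _ _ c_neq0) : M2' (c1 *: x).
    by apply/sub12/hM1'; exists x.
  by rewrite !scalerA [c^-1 * _]mulrC -invfM mulrC.
- move=> y By; have : M1' (pi *: (c2 *: (c *: y))).
    apply: quot_residue_pi hM1'E quot _ _; apply/hM2'; exists (c *: y).
    by split => //; apply/hc; exists y.
  move/hM1'/(scale_latP _ _ c1_neq0); rewrite !scalerA.
  by congr M1; congr (_ *: _); field.
Qed.

Lemma fixed_point_bound p : valid_point v p ->
  exists P, P \in unitmx /\ forall B, \det B = 1 -> fixes_point B p ->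
    entries_vge v (conjmx P B) (- v pi).
Proof.
case: p => [M|M1 M2 t] /=.
  move=> /is_lattice_basis [E [E_unit hM]].
  exists (invmx E); split=> [|B detB]; first by rewrite unitmx_inv.
  exact: fixed_vertex_bound.
move=> [/is_lattice_basis [E [E_unit hM1]] _ [M1' [M2' [hom1 [hom2 quot]]]] _].
exists (invmx E); split=> [|B detB [[fixM1 _]|[swap _]]]; first by rewrite unitmx_inv.
  exact: fixed_vertex_bound fixM1.
exact: swapped_edge_bound hom1 hom2 quot swap.
Qed.

End Lattices.

Lemma dependent_choice_nat (X : Type) (P : nat -> X -> Prop) (R : nat -> X -> X -> Prop) x0 :
  P 0%N x0 -> (forall k x, P k x -> exists y, R k x y /\ P k.+1 y) ->
  exists f : nat -> X, f 0%N = x0 /\ forall k, P k (f k) /\ R k (f k) (f k.+1).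
Proof.
move=> P0 step.
have step' k x : exists y, P k x -> R k x y /\ P k.+1 y.
  by have [/step [y hy]|notP] := classic (P k x); [exists y|exists x].
pose next k x := proj1_sig (constructive_indefinite_description _ (step' k x)).
have nextP k x : P k x -> R k x (next k x) /\ P k.+1 (next k x).
  by rewrite /next; case: constructive_indefinite_description.
pose f := fix f k := if k is k'.+1 then next k' (f k') else x0.
have Pf k : P k (f k) by elim: k => [|k IH] //=; apply: (nextP _ _ IH).2.
by exists f; split => // k; split => //; apply: (nextP _ _ (Pf k)).1.
Qed.

Section NearMatrices.
Variables (K : fieldType) (v : K -> int).
Hypothesis hv : is_discrete_valuation v.

Lemma near_mx_refl A n : near_mx v A A n.
Proof. by move=> i j; rewrite subrr; left. Qed.

Lemma near_mx_sym A B n : near_mx v A B n -> near_mx v B A n.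
Proof. by move=> hAB i j; rewrite -opprB; apply: (vgeN hv). Qed.

Lemma near_mxW A B n m : near_mx v A B n -> m <= n -> near_mx v A B m.
Proof. by move=> hAB mn i j; apply: vgeW (hAB i j) mn. Qed.

Lemma near_mx_trans A B C n : near_mx v A B n -> near_mx v B C n -> near_mx v A C n.
Proof.
move=> hAB hBC i j; have -> : C i j - A i j = (C i j - B i j) + (B i j - A i j) by ring.
exact: (vgeD hv).
Qed.

Lemma nested_near_limit (Cs : nat -> 'M[K]_2) (lev : nat -> int) :
  complete_val v -> {homo lev : k q / (k <= q)%N >-> k <= q} ->
  (forall n, exists k, n <= lev k) ->
  (forall k, near_mx v (Cs k) (Cs k.+1) (lev k)) ->
  exists L, forall k, near_mx v (Cs k) L (lev k).
Proof.
move=> complete lev_mono lev_unbounded nested.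
have chain k q : (k <= q)%N -> near_mx v (Cs k) (Cs q) (lev k).
  elim: q => [|q IH]; first by rewrite leqn0 => /eqP ->; apply: near_mx_refl.
  rewrite leq_eqVlt ltnS => /orP[/eqP ->|kq]; first exact: near_mx_refl.
  exact: near_mx_trans (IH kq) (near_mxW (nested q) (lev_mono _ _ kq)).
have lim ij : exists l, converges_to v (fun k => Cs k ij.1 ij.2) l.
  apply: complete => n; have [k hk] := lev_unbounded n; exists k => p q kp kq.
  exact: vgeW (near_mx_trans (near_mx_sym (chain k q kq)) (chain k p kp) ij.1 ij.2) hk.
have [l hl] := fin_all_exists lim.
exists (\matrix_(i, j) l (i, j)) => k i j; have [N hN] := hl (i, j) (lev k).
pose p := maxn N k.
have -> : (\matrix_(i, j) l (i, j)) i j - Cs k i j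
          = (Cs p i j - Cs k i j) - (Cs p i j - l (i, j)) by rewrite mxE; ring.
by apply: (vgeB hv); [apply: chain; rewrite leq_maxr|apply: hN; rewrite leq_maxl].
Qed.

End NearMatrices.

Section HeineBorel.
Variables (K : fieldType) (v : K -> int).
Hypothesis hv : is_discrete_valuation v.
Hypothesis hcomplete : complete_val v.
Hypothesis hres : finite_residue_field v.
Variable pi : K.
Hypotheses (pi_neq0 : pi != 0) (pi_gt0 : 0 < v pi)
  (pi_min : forall y, y != 0 -> 0 < v y -> v pi <= v y).

Lemma residue_digit (rs : seq K) (t a c : K) :
  (forall a, in_O v a -> exists2 r, r \in rs & vge v (a - r) 1) ->
  t != 0 -> vge v (a - c) (v t) ->
  exists k : 'I_(size rs), vge v (a - (c + t * nth 0 rs k)) (v t + v pi).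
Proof.
move=> digits t_neq0 ac.
pose b := (a - c) / t.
have tb : t * b = a - c by rewrite mulrC divfK.
have [r r_in br] : exists2 r, r \in rs & vge v (b - r) 1.
  by apply: digits; rewrite /in_O -(subrr (v t)); apply: vge_mulKl; rewrite ?tb.
have r_idx : (index r rs < size rs)%N by rewrite index_mem.
exists (Ordinal r_idx) => /=.
rewrite nth_index // (_ : a - (c + t * r) = t * (b - r)); last by rewrite mulrBr tb; ring.
apply: (vgeMl hv); case: br => [->|br]; first by left.
have [->|br_neq0] := eqVneq (b - r) 0; first by left.
by right; apply: pi_min => //; apply: lt_le_trans br.
Qed.

(* Finitely many residue digits per entry refine a ball of radius v t into
   balls of radius v t + v pi. *)
Lemma near_mx_refine (C : 'M[K]_2) (t : K) : t != 0 ->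
  exists Ds : seq 'M[K]_2, (forall D, D \in Ds -> near_mx v C D (v t)) /\
    forall Y, near_mx v C Y (v t) -> exists2 D, D \in Ds & near_mx v D Y (v t + v pi).
Proof.
move=> t_neq0; have [rs [rs_int digits]] := hres.
pose mk (f : {ffun 'I_2 * 'I_2 -> 'I_(size rs)}) : 'M[K]_2 :=
  C + t *: \matrix_(i, j) nth 0 rs (f (i, j)).
exists [seq mk f | f <- enum {ffun 'I_2 * 'I_2 -> 'I_(size rs)}]; split.
  move=> D /mapP [f _ ->] i j; rewrite /mk !mxE addrAC subrr add0r.
  by have := vgeMl hv t (rs_int _ (mem_nth 0 (ltn_ord (f (i, j))))); rewrite addr0.
move=> Y hY.
have [g hg] := @fin_all_exists _ (fun _ => 'I_(size rs))
  (fun ij k => vge v (Y ij.1 ij.2 - (C ij.1 ij.2 + t * nth 0 rs k)) (v t + v pi))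
  (fun ij => residue_digit digits t_neq0 (hY ij.1 ij.2)).
exists (mk [ffun ij => g ij]); first by apply: map_f; rewrite mem_enum.
by move=> i j; rewrite /mk !mxE ffunE; apply: (hg (i, j)).
Qed.

Section Cover.
Variables (H : 'M[K]_2 -> Prop) (I : Type) (U : I -> 'M[K]_2 -> Prop).

Definition finitely_covered (C : 'M[K]_2) (n : int) :=
  exists s : seq I, forall A, H A -> near_mx v C A n -> exists i, List.In i s /\ U i A.

Lemma finitely_covered_refine (C : 'M[K]_2) (t : K) : t != 0 ->
  ~ finitely_covered C (v t) ->
  exists D, near_mx v C D (v t) /\ ~ finitely_covered D (v t + v pi).
Proof.
move=> t_neq0 not_cov; apply: NNPP => all_cov; apply: not_cov.
have [Ds [near_Ds refine_Ds]] := near_mx_refine C t_neq0.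
suff [s hs] : exists s : seq I, forall A, H A ->
    (exists2 D, D \in Ds & near_mx v D A (v t + v pi)) -> exists i, List.In i s /\ U i A.
  by exists s => A HA /refine_Ds; apply: hs.
have cov_Ds D : D \in Ds -> finitely_covered D (v t + v pi).
  by move=> D_in; apply: NNPP => not_covD; apply: all_cov; exists D; split => //; apply: near_Ds.
elim: Ds cov_Ds {near_Ds refine_Ds} => [|D Ds IH] cov_Ds; first by exists [::] => A _ [].
have [s1 h1] := cov_Ds D (mem_head _ _).
have [s2 h2] := IH (fun D' D'_in => cov_Ds D' (predU1r D' D D'_in)).
exists (s1 ++ s2) => A HA [D' /predU1P [->|D'_in] near_A].
  by have [i [i_in Ui]] := h1 A HA near_A; exists i; split => //; apply: List.in_or_app; left.
have [i [i_in Ui]] := h2 A HA (ex_intro2 _ _ D' D'_in near_A).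
by exists i; split => //; apply: List.in_or_app; right.
Qed.

End Cover.

(* A bounded, sequentially closed subset of SL(2,K) is compact: if some open
   cover had no finite subcover, repeated refinement would give nested balls
   of shrinking radius none of which is finitely covered; their limit lies in
   H, hence in some open set of the cover, which then contains a whole ball. *)
Lemma heine_borel (H : 'M[K]_2 -> Prop) (N0 : int) :
  psl_set H -> (forall Y, H Y -> entries_vge v Y N0) ->
  (forall (Ys : nat -> 'M[K]_2) L, (forall k, H (Ys k)) ->
      (forall n, exists k0, forall k, (k0 <= k)%N -> near_mx v (Ys k) L n) -> H L) ->
  psl_compact v H.
Proof.
move=> H_psl H_bounded H_closed; split => // I U U_open cover.
apply: NNPP => not_compact.
pose t k := pi ^+ k / pi ^+ `|N0|.
have t_neq0 k : t k != 0 by rewrite mulf_neq0 ?invr_eq0 ?expf_neq0.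
have vt k : v (t k) = (k%:Z - `|N0|%:Z) * v pi.
  by rewrite (dvalM hv) ?invr_eq0 ?expf_neq0 // (dvalV hv) ?expf_neq0 // !(dvalX hv) //; lia.
have vtS k : v (t k.+1) = v (t k) + v pi by rewrite !vt; lia.
have vt_mono : {homo (fun k => v (t k)) : k q / (k <= q)%N >-> k <= q}.
  by move=> k q kq; rewrite !vt; nia.
have vt_unbounded n : exists k, n <= v (t k) by exists (`|n| + `|N0|)%N; rewrite vt; nia.
pose bad k C := ~ finitely_covered H U C (v (t k)).
have [Cs [_ Cs_bad]] : exists Cs : nat -> 'M[K]_2, Cs 0%N = 0 /\
    forall k, bad k (Cs k) /\ near_mx v (Cs k) (Cs k.+1) (v (t k)).
  apply: (@dependent_choice_nat _ bad (fun k C D => near_mx v C D (v (t k))) 0)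
    => [[s hs]|k C /(finitely_covered_refine (t_neq0 k))].
    apply: not_compact; exists s => A HA; apply: hs => // i j.
    by rewrite mxE subr0; apply: vgeW (H_bounded A HA i j) _; rewrite vt; nia.
  by rewrite -vtS.
have [L near_L] := nested_near_limit hv hcomplete vt_mono vt_unbounded (fun k => (Cs_bad k).2).
have Cs_inhabited k : exists Y, H Y /\ near_mx v (Cs k) Y (v (t k)).
  apply: NNPP => empty; apply: (Cs_bad k).1; exists [::] => A HA near_A.
  by case: empty; exists A.
have [Ys Ys_near] := functional_choice _ Cs_inhabited.
have HL : H L.
  apply: (H_closed Ys) => [k|n]; first exact: (Ys_near k).1.
  have [k0 hk0] := vt_unbounded n; exists k0 => k k0k.
  apply: near_mxW (near_mx_trans hv (near_mx_sym hv (Ys_near k).2) (near_L k)) _.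
  exact: le_trans hk0 (vt_mono _ _ k0k).
have [i Ui] := cover L HL; have [n ball_L] := (U_open i).2 L Ui (H_psl.1 L HL).
have [k hk] := vt_unbounded n.
apply: (Cs_bad k).1; exists [:: i] => A HA near_A; exists i; split; first by left.
apply: ball_L; first exact: H_psl.1.
exact: near_mxW (near_mx_trans hv (near_mx_sym hv (near_L k)) near_A) hk.
Qed.

End HeineBorel.

Lemma conjmx_nonscalar (K : fieldType) (P A : 'M[K]_2) : P \in unitmx ->
  \det A = 1 -> ~ psl_eq A 1%:M -> ~~ is_scalar_mx (conjmx P A).
Proof.
move=> P_unit detA A_neq1; apply/negP => /is_scalar_mxP [a PA].
have A_scalar : A = a%:M.
  by rewrite -(conjmxK A P_unit) PA conjmx_scalar // row_free_unit unitmx_inv.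
have : (a - 1) * (a + 1) = 0.
  by rewrite -subr_sqr expr1n -det_scalar -A_scalar detA subrr.
move/eqP; rewrite mulf_eq0 subr_eq0 addr_eq0 => /orP [] /eqP a_pm1; apply: A_neq1.
  by left; rewrite A_scalar a_pm1.
by right; rewrite A_scalar a_pm1 raddfN.
Qed.

Section NormalSubgroupSpan.
Variables (K : fieldType) (Gam : Type).
Variables (mul : Gam -> Gam -> Gam) (inv : Gam -> Gam) (one : Gam).
Hypothesis hGam : is_group mul inv one.
Variable rho : Gam -> 'M[K]_2.
Hypothesis rhoSL : forall g, in_SL2 (rho g).
Hypothesis rhoM : forall g h, psl_eq (rho (mul g h)) (rho g *m rho h).
Variable Ups : Gam -> Prop.
Hypothesis hUps : is_normal_subgroup mul inv one Ups.
Hypothesis rho_dense : zariski_dense_SL2 (fun A => exists g, psl_eq A (rho g)).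
Variable u0 : Gam.
Hypotheses (Ups_u0 : Ups u0) (rho_u0 : ~ psl_eq (rho u0) 1%:M).

Lemma Ups_conjg g u : Ups u -> Ups (mul (mul g u) (inv g)).
Proof. by case: hUps => _ _ _; apply. Qed.

Lemma rho_conjg_Ups g u : Ups u ->
  exists2 w, Ups w & psl_eq (rho g *m rho u *m adj2 (rho g)) (rho w).
Proof.
move=> Ups_u; exists (mul (mul g u) (inv g)); first exact: Ups_conjg.
exact: psl_eq_sym (rho_conjg hGam rhoSL rhoM g u).
Qed.

Variables (P : 'M[K]_2) (x : K).
Hypotheses (P_unit : P \in unitmx) (x_neq0 : x != 0) (x_neq1 : x != 1).

Section Annihilators.
Variables (C : 'M[K]_(2 * 2)) (j : 'I_(2 * 2)).
Hypothesis C_Ups : forall u, Ups u -> (mxvec (rho u) *m C) 0 j = 0.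

(* Normality of Ups makes the form vanish on the rho(Gam)-conjugates of
   rho u0; Zariski density extends this to all SL(2)-conjugates. *)
Lemma annihilator_SL2_conj B : in_SL2 B -> (mxvec (B *m rho u0 *m adj2 B) *m C) 0 j = 0.
Proof.
apply: zariski_dense_conj_form rho_dense _ B => A [g A_rho_g].
have -> : A *m rho u0 *m adj2 A = rho g *m rho u0 *m adj2 (rho g).
  by case: A_rho_g => ->; rewrite ?adj2N ?mulNmx ?mulmxN ?opprK.
have [w Ups_w [->|->]] := rho_conjg_Ups g Ups_u0; first exact: C_Ups.
by rewrite linearN mulNmx mxE C_Ups ?oppr0.
Qed.

Lemma annihilator_offdiag a b : a != b ->
  (mxvec (conjmx (invmx P) (delta_mx a b)) *m C) 0 j = 0.
Proof.
move=> a_neq_b; have Pinv_unit : invmx P \in unitmx by rewrite unitmx_inv.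
pose psi Y := (mxvec (conjmx (invmx P) Y) *m C) 0 j.
have psiD X Y : psi (X + Y) = psi X + psi Y.
  by rewrite /psi conjmxD linearD mulmxDl mxE.
have psiZ c X : psi (c *: X) = c * psi X.
  by rewrite /psi conjmxZ linearZ -scalemxAl mxE.
have rho_u0_SL : \det (rho u0) = 1 := rhoSL u0.
have nonscalar := conjmx_nonscalar P_unit rho_u0_SL rho_u0.
have ann : conj_annihilates psi (conjmx P (rho u0)).
  move=> B detB; rewrite /psi 2!(conjmxMu Pinv_unit) (conjmx_adj2 Pinv_unit detB) conjmxK //.
  by apply: annihilator_SL2_conj; rewrite /in_SL2 (det_conjmx Pinv_unit).
case: (ord2P a) a_neq_b => ->; case: (ord2P b) => -> // _.
  exact: (conj_annihilates_e01 x_neq0 x_neq1 psiD psiZ nonscalar ann).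
exact: (conj_annihilates_e10 x_neq0 x_neq1 psiD psiZ nonscalar ann).
Qed.

End Annihilators.

Lemma offdiag_in_span a b : a != b ->
  exists (s : seq Gam) (c : 'I_(size s) -> K), (forall k : 'I_(size s), Ups (nth one s k)) /\
    conjmx (invmx P) (delta_mx a b) = \sum_k c k *: rho (nth one s k).
Proof.
move=> a_neq_b; case: (span_or_annihilator one rho Ups (conjmx (invmx P) (delta_mx a b))) => //.
move=> [C [j [Cj C_Ups]]].
by move: Cj; rewrite (annihilator_offdiag C_Ups a_neq_b) eqxx.
Qed.

Variable v : K -> int.
Hypothesis hv : is_discrete_valuation v.
Variable n_Ups : int.
Hypothesis Ups_bounded : forall u, Ups u -> entries_vge v (conjmx P (rho u)) n_Ups.

Lemma conj_offdiag_bounded a b : a != b -> exists n, forall g,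
  entries_vge v (conjmx P (rho g) *m delta_mx a b *m adj2 (conjmx P (rho g))) n.
Proof.
move=> a_neq_b; have [s [c [Ups_s span_ab]]] := offdiag_in_span a_neq_b.
have [n_c c_bounded] := vge_uniform_bound v c.
exists (n_c + n_Ups) => g; have Pinv_unit : invmx P \in unitmx by rewrite unitmx_inv.
rewrite -conjmx_adj2 ?rhoSL // -[delta_mx a b](conjmxVK _ P_unit) -!conjmxMu //.
rewrite span_ab mulmx_sumr mulmx_suml conjmx_sum.
under eq_bigr do rewrite -scalemxAr -scalemxAl conjmxZ.
apply: (entries_vge_sum hv c_bounded) => k.
have [w Ups_w [->|->]] := rho_conjg_Ups g (Ups_s k); first exact: Ups_bounded.
by rewrite conjmxN; apply: (entries_vgeN hv); apply: Ups_bounded.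
Qed.

Lemma offdiag_conj_entries (G : 'M[K]_2) :
  [/\ (G *m delta_mx 0 1 *m adj2 G) 0 1 = G 0 0 * G 0 0,
      (G *m delta_mx 0 1 *m adj2 G) 1 0 = - (G 1 0 * G 1 0),
      (G *m delta_mx 1 0 *m adj2 G) 0 1 = - (G 0 1 * G 0 1)
    & (G *m delta_mx 1 0 *m adj2 G) 1 0 = G 1 1 * G 1 1].
Proof. by split; rewrite !(mxE, big_ord2) /= ?mulr1n ?mulr0n; ring. Qed.

(* The entries of G e_ab G^-1 include the squares of all entries of G. *)
Lemma rho_conj_bounded : exists n, forall g, entries_vge v (conjmx P (rho g)) n.
Proof.
have [n01 bounded01] := @conj_offdiag_bounded 0 1 isT.
have [n10 bounded10] := @conj_offdiag_bounded 1 0 isT.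
exists (Order.min (Order.min n01 n10) 0) => g i j.
have [e1 e2 e3 e4] := offdiag_conj_entries (conjmx P (rho g)).
apply: (vge_sqr hv); first by rewrite ge_min lexx orbT.
case: (ord2P i) => ->; case: (ord2P j) => ->.
- by have := bounded01 g 0 1; rewrite e1 => h; apply: vgeW h _; lia.
- by have := vgeN hv (bounded10 g 0 1); rewrite e3 opprK => h; apply: vgeW h _; lia.
- by have := vgeN hv (bounded01 g 1 0); rewrite e2 opprK => h; apply: vgeW h _; lia.
- by have := bounded10 g 1 0; rewrite e4 => h; apply: vgeW h _; lia.
Qed.

End NormalSubgroupSpan.

Lemma vge_det_near (K : fieldType) (v : K -> int) (A B : 'M[K]_2) n m :
  is_discrete_valuation v -> entries_vge v A m -> entries_vge v B m ->
  near_mx v A B n -> vge v (\det B - \det A) (n + m).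
Proof.
move=> hv hA hB hAB.
have -> : \det B - \det A = (B 0 0 - A 0 0) * B 1 1 + (B 1 1 - A 1 1) * A 0 0
                          - ((B 0 1 - A 0 1) * B 1 0 + (B 1 0 - A 1 0) * A 0 1).
  by rewrite !det2; ring.
by apply: (vgeB hv); apply: (vgeD hv); apply: (vgeM hv).
Qed.

Section LatticeStabilizer.
Variables (K : fieldType) (v : K -> int).
Hypothesis hv : is_discrete_valuation v.
Variables (Gam : Type) (mul : Gam -> Gam -> Gam) (inv : Gam -> Gam) (one : Gam).
Hypothesis hGam : is_group mul inv one.
Variable rho : Gam -> 'M[K]_2.
Hypothesis rhoSL : forall g, in_SL2 (rho g).
Hypothesis rhoM : forall g h, psl_eq (rho (mul g h)) (rho g *m rho h).
Variables (P : 'M[K]_2) (n_rho : int).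
Hypothesis P_unit : P \in unitmx.
Hypothesis rho_bounded : forall g, entries_vge v (conjmx P (rho g)) n_rho.

(* In the coordinates given by P, the largest rho(Gam)-stable lattice
   contained in O^2. *)
Definition stable_lattice (x : 'cV[K]_2) := forall g, vec_vge v (conjmx P (rho g) *m x) 0.

Definition lattice_stabilizer (Y : 'M[K]_2) :=
  [/\ \det Y = 1, forall x, stable_lattice x -> stable_lattice (conjmx P Y *m x)
    & forall x, stable_lattice x -> stable_lattice (conjmx P (adj2 Y) *m x)].

Lemma stable_latticeD x y : stable_lattice x -> stable_lattice y -> stable_lattice (x + y).
Proof. by move=> hx hy g; rewrite mulmxDr; apply: (vec_vgeD hv). Qed.

Lemma stable_latticeN x : stable_lattice x -> stable_lattice (- x).
Proof. by move=> hx g; rewrite mulmxN; apply: (vec_vgeN hv). Qed.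

Lemma stable_lattice_int x : stable_lattice x -> vec_vge v x 0.
Proof.
move=> hx; have := hx one; case: (psl_eq_conjmx P (rho1 hGam rhoSL rhoM)) => ->.
  by rewrite conjmx1u // mul1mx.
by rewrite conjmx1u // mulNmx mul1mx => /(vec_vgeN hv); rewrite opprK.
Qed.

Lemma stable_lattice_of_vge x : vec_vge v x (- n_rho) -> stable_lattice x.
Proof. by move=> hx g; have := vec_vgeM hv (rho_bounded g) hx; rewrite subrr. Qed.

Lemma stable_lattice_rho Y h : psl_eq Y (rho h) ->
  forall x, stable_lattice x -> stable_lattice (conjmx P Y *m x).
Proof.
move=> Y_rho x hx g; rewrite mulmxA -conjmxMu //.
have := psl_eq_conjmx P (psl_eq_trans (psl_eq_mul (psl_eq_refl (rho g)) Y_rho)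
                                        (psl_eq_sym (rhoM g h))).
by case=> ->; rewrite ?conjmxN ?mulNmx //; apply: (vec_vgeN hv).
Qed.

Lemma lattice_stabilizer_rho g : lattice_stabilizer (rho g).
Proof.
split; first exact: rhoSL.
  exact: stable_lattice_rho (psl_eq_refl _).
exact: stable_lattice_rho (psl_eq_sym (rhoV hGam rhoSL rhoM g)).
Qed.

Lemma lattice_stabilizer_subgroup : psl_subgroup lattice_stabilizer.
Proof.
split.
- split; first by move=> A [].
  move=> A [detA stabA stab_adjA]; split; first by rewrite det2N.
    by move=> x hx; rewrite conjmxN // mulNmx; apply/stable_latticeN/stabA.
  by move=> x hx; rewrite adj2N conjmxN // mulNmx; apply/stable_latticeN/stab_adjA.
- by split; [exact: det1|move=> x; rewrite conjmx1u // mul1mx|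
             move=> x; rewrite adj2_1 conjmx1u // mul1mx].
- move=> A B [detA stabA stab_adjA] [detB stabB stab_adjB]; split.
  + by rewrite det_mulmx detA detB mulr1.
  + by move=> x hx; rewrite conjmxMu // -mulmxA; apply/stabA/stabB.
  + by move=> x hx; rewrite adj2M conjmxMu // -mulmxA; apply/stab_adjB/stab_adjA.
- move=> A [detA stabA stab_adjA]; rewrite invmx_adj2 //.
  by split; [rewrite det_adj2|exact: stab_adjA|rewrite adj2K].
Qed.

Variable pi : K.
Hypotheses (pi_neq0 : pi != 0) (pi_gt0 : 0 < v pi).

(* The stable lattice contains pi^q O^2 for q large and is contained in O^2. *)
Lemma lattice_stabilizer_bounded :
  exists n, forall Y, lattice_stabilizer Y -> entries_vge v Y n.
Proof.
pose s := pi ^+ `|n_rho|.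
have s_neq0 : s != 0 by rewrite expf_neq0.
have vs : - n_rho <= v s by rewrite (dvalX hv) //; nia.
have [nP P_bounded] := entries_vge_exists v P.
have [nPi Pi_bounded] := entries_vge_exists v (invmx P).
exists (nPi + - v s + nP) => Y [_ stabY _].
have conjY_bounded : entries_vge v (conjmx P Y) (- v s).
  apply: (entries_vge_of_vec hv) => y hy i.
  have s_y : stable_lattice (s *: y).
    apply: stable_lattice_of_vge => k; rewrite mxE.
    by have := vgeMl hv s (hy k); rewrite addr0 => h; apply: vgeW h vs.
  have := stable_lattice_int (stabY _ s_y) i.
  rewrite -scalemxAr mxE => /(vge_mulKl hv s_neq0).
  by rewrite sub0r.
rewrite -(conjmxK Y P_unit) conjVmx //.
exact: (entries_vgeM hv (entries_vgeM hv Pi_bounded conjY_bounded) P_bounded).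
Qed.

Lemma stable_lattice_perturb : exists n, forall D, entries_vge v D n ->
  forall x, stable_lattice x -> stable_lattice (conjmx P D *m x).
Proof.
have [nP P_bounded] := entries_vge_exists v P.
have [nPi Pi_bounded] := entries_vge_exists v (invmx P).
exists (- n_rho - nP - nPi) => D D_small x hx; apply: stable_lattice_of_vge.
have := vec_vgeM hv (entries_vgeM hv (entries_vgeM hv P_bounded D_small) Pi_bounded)
  (stable_lattice_int hx).
by rewrite conjumx // => h i; apply: vgeW (h i) _; lia.
Qed.

Lemma lattice_stabilizer_closed (Ys : nat -> 'M[K]_2) L :
  (forall k, lattice_stabilizer (Ys k)) ->
  (forall n, exists k0, forall k, (k0 <= k)%N -> near_mx v (Ys k) L n) ->
  lattice_stabilizer L.
Proof.
move=> Ys_stab Ys_L.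
have [n0 bounded] := lattice_stabilizer_bounded.
have [n_small perturb] := stable_lattice_perturb.
pose m := Order.min n0 0.
have Ys_m k : entries_vge v (Ys k) m.
  by apply: entries_vgeW (bounded _ (Ys_stab k)) _; rewrite ge_min lexx.
have L_m : entries_vge v L m.
  have [k0 near0] := Ys_L 0; move=> i j.
  have -> : L i j = Ys k0 i j + (L i j - Ys k0 i j) by ring.
  apply: (vgeD hv); first exact: Ys_m.
  by apply: vgeW (near0 k0 (leqnn _) i j) _; rewrite ge_min lexx orbT.
have [k1 near1] := Ys_L n_small; have [_ stab1 stab_adj1] := Ys_stab k1.
have small_diff : entries_vge v (L - Ys k1) n_small.
  by move=> i j; rewrite !mxE; apply: near1.
split.
- apply/eqP; rewrite -subr_eq0; apply/eqP; apply: vge_eq0 => n.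
  have [k near_k] := Ys_L (n - m); have [detYk _ _] := Ys_stab k.
  rewrite -detYk (_ : n = n - m + m); last by rewrite subrK.
  exact: vge_det_near hv (Ys_m k) L_m (near_k k (leqnn _)).
- move=> x hx.
  have -> : conjmx P L *m x = conjmx P (Ys k1) *m x + conjmx P (L - Ys k1) *m x.
    by rewrite -mulmxDl -conjmxD addrC subrK.
  by apply: stable_latticeD; [apply: stab1|apply: perturb].
- move=> x hx.
  have -> : conjmx P (adj2 L) *m x
            = conjmx P (adj2 (Ys k1)) *m x + conjmx P (adj2 (L - Ys k1)) *m x.
    by rewrite -mulmxDl -conjmxD adj2B addrC subrK.
  by apply: stable_latticeD; [apply: stab_adj1|apply: perturb (entries_vge_adj2 hv small_diff) _ _].
Qed.

End LatticeStabilizer.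

Unset Implicit Arguments.

Theorem lemma4p14
  (K : fieldType) (v : K -> int)
  (hv : is_discrete_valuation v) (hcomplete : complete_val v)
  (hres : finite_residue_field v)
  (Gam : Type) (mul : Gam -> Gam -> Gam) (inv : Gam -> Gam) (one : Gam)
  (hGam : is_group mul inv one)
  (rho : Gam -> 'M[K]_2)
  (hrhoSL : forall g, in_SL2 (rho g))
  (hrho_hom : forall g h, psl_eq (rho (mul g h)) (rho g *m rho h))
  (Ups : Gam -> Prop) (hUps : is_normal_subgroup mul inv one Ups)
  (hfix : exists p, valid_point v p /\ forall u, Ups u -> fixes_point (rho u) p)
  (hzar : zariski_dense_SL2 (fun A => exists g, psl_eq A (rho g)))
  (hnoncpt : ~ exists H, [/\ psl_subgroup H, psl_compact v H
                           & forall g, H (rho g)]) :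
  forall u, Ups u -> psl_eq (rho u) 1%:M.
Proof.
move=> u Ups_u; apply: NNPP => rho_u_neq1.
have [pi [pi_neq0 pi_gt0 pi_min]] := exists_uniformizer hv.
have pi_neq1 : pi != 1 by apply: contraTneq pi_gt0 => ->; rewrite (dval1 hv) ltxx.
have [p [valid_p fix_p]] := hfix.
have [P [P_unit P_bounds]] := fixed_point_bound hv pi_neq0 pi_gt0 valid_p.
have Ups_bounded w : Ups w -> entries_vge v (conjmx P (rho w)) (- v pi).
  by move=> Ups_w; apply: P_bounds; [apply: hrhoSL|apply: fix_p].
have [n rho_bounded] := rho_conj_bounded hGam hrhoSL hrho_hom hUps hzar Ups_u
  rho_u_neq1 P_unit pi_neq0 pi_neq1 hv Ups_bounded.
have stab_subgroup := lattice_stabilizer_subgroup hv rho P_unit.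
have [stab_psl _ _ _] := stab_subgroup.
apply: hnoncpt; exists (lattice_stabilizer v rho P); split => //.
- have [N0 stab_bounded] := lattice_stabilizer_bounded hv hGam hrhoSL hrho_hom P_unit
    rho_bounded pi_neq0 pi_gt0.
  apply: (heine_borel hv hcomplete hres pi_neq0 pi_gt0 pi_min stab_psl stab_bounded).
  exact: (lattice_stabilizer_closed hv hGam hrhoSL hrho_hom P_unit rho_bounded pi_neq0 pi_gt0).
- exact: (lattice_stabilizer_rho hv hGam hrhoSL hrho_hom P_unit).
Qed.
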